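(* Let $f,w\colon\mathbb{R}^d\to[0,\infty)$ be two proper log-concave functions such that $w$ is the John function of $f$ with respect to $w$. Assume in addition that for every $\xi\in(0,\|f\|_\infty)$ there is a positive position $g$ of $w$ with $g\le f$ and $\|g\|_\infty=\xi$. Then \[ \|w\|_\infty\le\|f\|_\infty\le e^d\,\|w\|_\infty. \]
   Context: A function $\mathbb{R}^d\to[0,\infty)$ is proper log-concave if it is upper semi-continuous, log-concave, with finite positive integral. Positions of $w$ are functions $x\mapsto\alpha\,w(Ax+a)$ with $A$ a non-singular real $d\times d$ matrix, $\alpha>0$, $a\in\mathbb{R}^d$; positive positions are those with $A$ positive definite. ''$w$ is the John function of $f$ with respect to $w$'' means $w\le f$ pointwise and $\int g\le\int w$ for every position $g$ of $w$ with $g\le f$. $\|\cdot\|_\infty$ is the supremum norm. *)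

From HB Require Import structures.
From mathcomp Require Import all_boot all_order all_algebra.
From mathcomp Require Import all_classical all_reals all_analysis.
Set Implicit Arguments. Unset Strict Implicit. Unset Printing Implicit Defensive.
Import Order.TTheory GRing.Theory Num.Theory.
Import numFieldNormedType.Exports.
Local Open Scope classical_set_scope.
Local Open Scope ring_scope.

(* Lebesgue integral over R^d (= 'rV[R]_d) of a nonnegative extended-real
   function, as the iterated one-dimensional Lebesgue integral
   (equal to the d-dimensional Lebesgue integral by Tonelli). *)
Fixpoint int_Rd (R : realType) (d : nat) : ('rV[R]_d -> \bar R) -> \bar R :=
  match d return ('rV[R]_d -> \bar R) -> \bar R with
  | 0 => fun F => F 0
  | d'.+1 => fun F =>
      (\int[@lebesgue_measure R]_(t in setT)
         int_Rd (fun v : 'rV[R]_d' => F (row_mx (const_mx t : 'rV[R]_1) v)))%E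
  end.

Definition integral_Rd (R : realType) (d : nat) (f : 'rV[R]_d -> R) : \bar R :=
  int_Rd (fun x => (f x)%:E).

Definition sup_norm (R : realType) (d : nat) (f : 'rV[R]_d -> R) : \bar R :=
  ereal_sup (range (fun x => (f x)%:E)).

Definition upper_semicontinuous (R : realType) (d : nat) (f : 'rV[R]_d -> R) :=
  forall (x : 'rV[R]_d) (a : R), f x < a -> \forall y \near x, f y < a.

Definition log_concave (R : realType) (d : nat) (f : 'rV[R]_d -> R) :=
  forall (x y : 'rV[R]_d) (t : R), 0 <= t <= 1 ->
    f x `^ (1 - t) * f y `^ t <= f ((1 - t) *: x + t *: y).

Definition proper_log_concave (R : realType) (d : nat) (f : 'rV[R]_d -> R) :=
  [/\ forall x, 0 <= f x,
      upper_semicontinuous f,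
      log_concave f &
      (0 < integral_Rd f < +oo)%E].

(* x is a row vector, so A x is written x *m A^T *)
Definition is_position (R : realType) (d : nat) (w g : 'rV[R]_d -> R) :=
  exists (A : 'M[R]_d) (alpha : R) (a : 'rV[R]_d),
    [/\ A \in unitmx, 0 < alpha &
        forall x, g x = alpha * w (x *m A^T + a)].

Definition pos_def (R : realType) (d : nat) (A : 'M[R]_d) :=
  A^T = A /\ forall v : 'rV[R]_d, v != 0 -> 0 < (v *m A *m v^T) 0 0.

Definition is_pos_position (R : realType) (d : nat) (w g : 'rV[R]_d -> R) :=
  exists (A : 'M[R]_d) (alpha : R) (a : 'rV[R]_d),
    [/\ pos_def A, 0 < alpha &
        forall x, g x = alpha * w (x *m A^T + a)].

Definition is_John_function (R : realType) (d : nat) (f w : 'rV[R]_d -> R) :=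
  (forall x, w x <= f x) /\
  forall g : 'rV[R]_d -> R, is_position w g -> (forall x, g x <= f x) ->
    (integral_Rd g <= integral_Rd w)%E.

(* The lower bound is w <= f.  For the upper bound let m bound w and suppose
   f y > e^d m; pick b > e^d with b m <= f y.  For 0 < q < 1 and
   u = y + (x - y) / q, log-concavity of f on the segment [u, y] gives
     f x >= f u ^ q * f y ^ (1 - q) >= w u ^ q * (b * w u) ^ (1 - q)
         = b ^ (1 - q) * w u,
   so x |-> b ^ (1 - q) * w (y + (x - y) / q) is a position of w below f with
   integral b ^ (1 - q) * q ^ d * int w.  As b > e^d, the exponent
   (1 - q) ln b + d ln q is positive for q close to 1, and this position
   contradicts the maximality of int w. *)

From HB Require Import structures.
From mathcomp Require Import all_boot all_order all_algebra.
From mathcomp Require Import all_classical all_reals all_analysis.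
From mathcomp Require Import ring lra measurable_realfun.
Import Order.TTheory GRing.Theory Num.Theory.
Import HBNNSimple.
Local Open Scope ring_scope.
Local Open Scope classical_set_scope.

Lemma ge0_le_integralT d (T : measurableType d) (R : realType)
    (mu : {measure set T -> \bar R}) (f g : T -> \bar R) :
  (forall x, 0 <= f x)%E -> (forall x, f x <= g x)%E ->
  (\int[mu]_(x in setT) f x <= \int[mu]_(x in setT) g x)%E.
Proof.
move=> f0 fg; have g0 x : (0 <= g x)%E by exact: le_trans (f0 x) (fg x).
rewrite !ge0_integralTE //; apply: ereal_sup_le => _ [h hf <-].
by exists h => //= x; exact: le_trans (hf x) (fg x).
Qed.

Section scale_shift.
Context {R : realType} (s c : R).
Hypothesis s_gt0 : 0 < s.
Local Notation mu := (@lebesgue_measure R).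

Lemma measurable_scale_shift :
  measurable_fun setT
    (fun t : measurableTypeR R => s * t + c : measurableTypeR R).
Proof. by apply: measurable_funD => //; apply: measurable_funM. Qed.

Lemma lebesgue_measure_preimage_scale_shift (A : set (measurableTypeR R)) :
  measurable A ->
  (mu ((fun t : measurableTypeR R => s * t + c)%R @^-1` A) = s^-1%:E * mu A)%E.
Proof.
(* the measure structure declared by the library on [pushforward mu f] *)
pose nu := measure_function_pushforward__canonical__measure_function_Measure
  mu measurable_scale_shift.
suff nuE B : measurable B -> mu B = mscale (NngNum (ltW s_gt0)) nu B.
  by move=> mA; rewrite [in RHS]nuE //= muleA -EFinM mulVf ?mul1e // gt_eqF.
apply: lebesgue_measure_unique => _ [[a b]] _ <-.
change (mu `]a, b]%classic = s%:E *
  mu ((fun t : measurableTypeR R => s * t + c)%R @^-1` `]a, b]%classic))%E.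
rewrite (_ : _ @^-1` _ = `](a - c) / s, (b - c) / s]%classic); last first.
  by apply/seteqP; split => t /=;
    rewrite !in_itv /= ltr_pdivrMr // ler_pdivlMr // ltrBlDr lerBrDr
      ![t * s]mulrC.
rewrite !lebesgue_measure_itv /= !lte_fin ltr_pM2r ?invr_gt0 // ltrD2r.
case: ifP => _; last by rewrite mule0.
by rewrite -!EFinD -EFinM; congr EFin; field; rewrite gt_eqF.
Qed.

Lemma ge0_integral_scale_shift (f : measurableTypeR R -> \bar R) :
  measurable_fun setT f -> (forall t, 0 <= f t)%E ->
  (\int[mu]_(t in setT) f (s * t + c)%R = s^-1%:E * \int[mu]_(t in setT) f t)%E.
Proof.
move=> mf f0.
have := @ge0_integral_pushforward _ _ _ _ _ _ measurable_scale_shift mu setT f.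
move=> /(_ measurableT mf (fun t _ => f0 t)) <-.
have si_ge0 : 0 <= s^-1 by rewrite invr_ge0 ltW.
rewrite (eq_measure_integral (mscale (NngNum si_ge0) mu)).
- by rewrite ge0_integral_mscale.
- exact: measurable_scale_shift.
- by move=> ? A mA _; exact: lebesgue_measure_preimage_scale_shift.
Qed.

(* [Phi] need not be measurable: the inner integrals of [int_Rd] are not known
   to be, so only the bound coming from simple functions below [Phi] is used. *)
Lemma ge0_integral_scale_shift_ge (Phi : measurableTypeR R -> \bar R) (K : R) :
  (forall t, 0 <= Phi t)%E -> 0 <= K ->
  ((K / s)%:E * \int[mu]_(t in setT) Phi t <=
   \int[mu]_(t in setT) (K%:E * Phi (s * t + c)%R))%E.
Proof.
move=> Phi0; rewrite le_eqVlt => /predU1P[<-|K_gt0].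
  by rewrite mul0r mul0e; apply: integral_ge0 => t _; rewrite mul0e.
rewrite ge0_integralTE // -ereal_sup_pZl ?divr_gt0 //.
apply: ge_ereal_sup => _ [_ [h hPhi <-] <-].
have mh : measurable_fun setT (EFin \o h) by exact/measurable_EFinP.
rewrite -integralT_nnsfun EFinM -muleA -ge0_integral_scale_shift //; last first.
  by move=> t; rewrite lee_fin.
rewrite -ge0_integralZl_EFin //; last 3 first.
- by move=> t _; rewrite lee_fin.
- exact: (measurableT_comp mh measurable_scale_shift).
- exact: ltW.
apply: ge0_le_integralT => t.
  by rewrite -EFinM lee_fin mulr_ge0 // ltW.
by apply: lee_wpmul2l; [rewrite lee_fin ltW | exact: hPhi].
Qed.

End scale_shift.

Lemma int_Rd_ge0 {R : realType} {d : nat} (F : 'rV[R]_d -> \bar R) :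
  (forall x, 0 <= F x)%E -> (0 <= int_Rd F)%E.
Proof.
elim: d F => [|d IH] F F0 /=; first exact: F0.
by apply: integral_ge0 => t _; apply: IH => v; exact: F0.
Qed.

Lemma row_mx_scale_shift (R : ringType) (d : nat) (s t : R) (v : 'rV[R]_d)
    (b : 'rV[R]_(1 + d)) :
  s *: row_mx (const_mx t : 'rV_1) v + b =
  row_mx (const_mx (s * t + lsubmx b ord0 ord0)) (s *: v + rsubmx b).
Proof.
rewrite -{1}(hsubmxK b) scale_row_mx add_row_mx; congr row_mx.
by apply/rowP => j; rewrite !mxE ord1.
Qed.

Lemma int_Rd_scale_shift_ge {R : realType} {d : nat} (G : 'rV[R]_d -> \bar R)
    (K s : R) (b : 'rV[R]_d) :
  (forall x, 0 <= G x)%E -> 0 <= K -> 0 < s ->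
  ((K / s ^+ d)%:E * int_Rd G <= int_Rd (fun x => K%:E * G (s *: x + b)%R))%E.
Proof.
move=> + + s_gt0; elim: d G K b => [|d IH] G K b G0 K0 /=.
  by rewrite expr0 divr1 (thinmx0 (s *: 0 + b)).
pose Phi r := int_Rd (fun v : 'rV[R]_d => G (row_mx (const_mx r : 'rV_1) v)).
have Phi0 r : (0 <= Phi r)%E by apply: int_Rd_ge0 => v.
have Ksd_ge0 : 0 <= K / s ^+ d by rewrite divr_ge0 // exprn_ge0 // ltW.
rewrite exprSr invfM mulrA.
set c := lsubmx (b : 'rV_(1 + d)) ord0 ord0.
apply: le_trans (@ge0_integral_scale_shift_ge _ s c s_gt0 _ _ Phi0 Ksd_ge0) _.
apply: ge0_le_integralT => t; first by rewrite mule_ge0 // lee_fin.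
under eq_fun do rewrite row_mx_scale_shift.
exact: IH.
Qed.

Lemma exists_gt_mul_le {R : realFieldType} {a m y : R} :
  0 <= m -> a * m < y -> exists2 b, a < b & b * m <= y.
Proof.
move=> m_ge0 amy; have m1_gt0 : 0 < m + 1 by lra.
pose k := (y - a * m) / (m + 1).
have k_gt0 : 0 < k by rewrite divr_gt0 // subr_gt0.
have kE : k * m = y - a * m - k by rewrite /k; field; lra.
by exists (a + k); [lra | rewrite mulrDl kE; lra].
Qed.

Lemma exists_powR_mulXn_gt1 {R : realType} {d : nat} {b : R} :
  expR d%:R < b -> exists q : R, [/\ 0 < q, q < 1 & 1 < b `^ (1 - q) * q ^+ d].
Proof.
move=> db; have b_gt0 : 0 < b := lt_trans (expR_gt0 _) db.
set L := ln b; have dL : d%:R < L by rewrite -ltr_expR lnK.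
have d_ge0 : 0 <= d%:R :> R := ler0n _ d.
have L_gt0 : 0 < L := le_lt_trans d_ge0 dL.
(* any q in (d / L, 1) works, since ln q >= 1 - 1 / q gives
   (1 - q) L + d ln q >= (1 - q) (L - d / q) *)
pose q := (L + d%:R) / (2 * L).
have q_gt0 : 0 < q by rewrite divr_gt0 ?mulr_gt0 //; lra.
have q_lt1 : q < 1 by rewrite ltr_pdivrMr ?mulr_gt0 //; lra.
have dqL : d%:R < q * L.
  have -> : q * L = (L + d%:R) / 2 by rewrite /q; field; rewrite gt_eqF.
  lra.
exists q; split => //.
rewrite -[X in 1 < X]lnK ?posrE ?mulr_gt0 ?powR_gt0 ?exprn_gt0 // expR_gt1.
rewrite lnM ?posrE ?powR_gt0 ?exprn_gt0 // ln_powR lnXn // -mulr_natl -/L.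
have ln_ge : 1 - q^-1 <= ln q.
  have qV_gt0 : 0 < q^-1 by rewrite invr_gt0.
  have /le_ln1Dx : -1 < q^-1 - 1 by lra.
  by rewrite [1 + _]addrC subrK lnV ?posrE //; lra.
have := ler_wpM2l d_ge0 ln_ge.
have -> : d%:R * (1 - q^-1) = (1 - q) * (L - d%:R / q) - (1 - q) * L.
  by field; rewrite gt_eqF.
have : 0 < (1 - q) * (L - d%:R / q).
  by rewrite mulr_gt0 ?subr_gt0 // ltr_pdivrMr // mulrC.
lra.
Qed.

Lemma log_concave_dilation_le {R : realType} {d : nat} {f w : 'rV[R]_d -> R}
    {m b q : R} {y : 'rV[R]_d} :
  log_concave f -> (forall x, 0 <= w x) -> (forall x, w x <= f x) ->
  (forall x, w x <= m) -> 0 <= b -> b * m <= f y -> 0 < q <= 1 ->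
  forall x, b `^ (1 - q) * w (q^-1 *: x + (1 - q^-1) *: y) <= f x.
Proof.
move=> lcf w_ge0 wf wm b_ge0 bmf /andP[q_gt0 q_le1] x.
set u := q^-1 *: x + (1 - q^-1) *: y.
have t01 : 0 <= 1 - q <= 1 by apply/andP; split; lra.
have := lcf u y (1 - q) t01.
have -> : 1 - (1 - q) = q by ring.
have -> : q *: u + (1 - q) *: y = x.
  have e : q * (1 - q^-1) + (1 - q) = 0 by field; rewrite gt_eqF.
  rewrite scalerDr !scalerA mulfV ?gt_eqF // scale1r -addrA -scalerDl.
  by rewrite e scale0r addr0.
apply: le_trans.
have -> : b `^ (1 - q) * w u = w u `^ q * (b * w u) `^ (1 - q).
  have q1 : q + (1 - q) = 1 by ring.
  by rewrite powRM ?w_ge0 // mulrCA -powRD q1 ?powRr1 ?oner_eq0.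
have bwf : b * w u <= f y by apply: le_trans bmf; rewrite ler_wpM2l.
apply: ler_pM; rewrite ?powR_ge0 //.
  by apply: ge0_ler_powR; rewrite ?nnegrE ?(ltW q_gt0) ?w_ge0
     ?(le_trans (w_ge0 u)).
apply: ge0_ler_powR; rewrite ?nnegrE ?subr_ge0 ?mulr_ge0 //.
exact: le_trans (mulr_ge0 b_ge0 (w_ge0 u)) bwf.
Qed.

Lemma John_function_le_expR {R : realType} {d : nat} {f w : 'rV[R]_d -> R}
    {m : R} :
  log_concave f -> (forall x, 0 <= w x) -> is_John_function f w ->
  (0 < integral_Rd w < +oo)%E -> (forall x, w x <= m) ->
  forall x, f x <= expR d%:R * m.
Proof.
move=> lcf w_ge0 [wf John] /andP[Iw_gt0 Iw_lty] wm y.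
rewrite leNgt; apply/negP => ymf.
have m_ge0 : 0 <= m := le_trans (w_ge0 0) (wm 0).
have [b db bmf] := exists_gt_mul_le m_ge0 ymf.
have b_gt0 : 0 < b := lt_trans (expR_gt0 _) db.
have [q [q_gt0 q_lt1 Kq_gt1]] := exists_powR_mulXn_gt1 db.
set K := b `^ (1 - q) in Kq_gt1.
pose h x := K * w (q^-1 *: x + (1 - q^-1) *: y).
have h_pos : is_position w h.
  exists q^-1%:M, K, ((1 - q^-1) *: y); split; first 2 last.
  - by move=> x; rewrite tr_scalar_mx mul_mx_scalar.
  - by rewrite unitmxE det_scalar unitfE expf_neq0 // invr_neq0 // gt_eqF.
  - exact: powR_gt0.
have hf : forall x, h x <= f x.
  apply: log_concave_dilation_le lcf w_ge0 wf wm (ltW b_gt0) bmf _.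
  by rewrite q_gt0 ltW.
have Ih : ((K * q ^+ d)%:E * integral_Rd w <= integral_Rd h)%E.
  have := int_Rd_scale_shift_ge (fun x => (w x)%:E) K q^-1 ((1 - q^-1) *: y).
  rewrite exprVn invrK; apply; last by rewrite invr_gt0.
  - by move=> x; rewrite lee_fin.
  - exact: powR_ge0.
have := le_trans Ih (John h h_pos hf).
move: Iw_gt0 Iw_lty; case: (integral_Rd w) => [r | //| //].
rewrite lte_fin -EFinM lee_fin => r_gt0 _.
by rewrite ger_pMl // leNgt Kq_gt1.
Qed.

Theorem lemmaA4 (R : realType) (d : nat) (f w : 'rV[R]_d -> R) :
  proper_log_concave f -> proper_log_concave w ->
  is_John_function f w ->
  (forall xi : R, 0 < xi -> (xi%:E < sup_norm f)%E ->
     exists g : 'rV[R]_d -> R,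
       [/\ is_pos_position w g, (forall x, g x <= f x) & sup_norm g = xi%:E]) ->
  (sup_norm w <= sup_norm f /\
   sup_norm f <= (expR d%:R)%:E * sup_norm w)%E.
Proof.
move=> [_ _ lcf _] [w_ge0 _ _ Iw] John _.
have sup_norm_ub (g : 'rV[R]_d -> R) x : ((g x)%:E <= sup_norm g)%E.
  by apply: ereal_sup_ubound; exists x.
split.
  apply: ge_ereal_sup => _ [x _ <-].
  by apply: le_trans _ (sup_norm_ub f x); rewrite lee_fin John.1.
case Ew : (sup_norm w) => [m | | ].
- apply: ge_ereal_sup => _ [x _ <-]; rewrite -EFinM lee_fin.
  apply: (John_function_le_expR lcf w_ge0 John Iw) => y.
  by rewrite -lee_fin -Ew sup_norm_ub.
- by rewrite gt0_muley ?lte_fin ?expR_gt0 // leey.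
- by have := sup_norm_ub w 0; rewrite Ew leeNy_eq.
Qed.
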